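(* Fix a $C^0$-concept over $\mathbb{K}$. Let $E,F\in\mathcal{M}$, $U\subseteq E$ open, $n\in\mathbb{N}\cup\{\infty\}$, $f\colon U\to F$ of class $C^n$, $k\in\mathbb{N}$ with $k\le n$, and $x\in U$. Then $d^kf(x)\colon E^k\to F$ is a symmetric $\mathbb{K}$-multilinear $C^0$-map.
   Context: Let $\mathbb{K}$ be a commutative ring with unit carrying a topology. A $C^0$-concept over $\mathbb{K}$ consists of: (a) a class $\mathcal{M}$ of topologized $\mathbb{K}$-modules with $\mathbb{K}\in\mathcal{M}$; (b) for $E,F\in\mathcal{M}$ and open $U\subseteq E$, a set $C^0(U,F)$ of continuous maps; (c) for $E_1,E_2\in\mathcal{M}$ a topology on $E_1\times E_2$ (not necessarily the product topology) making it a member of $\mathcal{M}$ (finite products $E^k$ are formed iteratively); subject to: (I.1) composites of $C^0$-maps are $C^0$, identities and inclusions of open subsets are $C^0$; (I.2) $x\mapsto rx+b$ is $C^0$; (I.3) $t\mapsto tv+x$ is $C^0$; (I.4) $\mathbb{K}^\times$ is open and inversion is $C^0$; (I.5) $C^0$ is local on open covers; (II.1) projections and $v\mapsto(v,y)$, $w\mapsto(x,w)$ are $C^0$; (II.2) $f_1\times f_2$ is $C^0$ for $C^0$-maps $f_i$; (II.3) diagonals are $C^0$; (II.4) exchange/associativity maps of products are $C^0$ both ways; (II.5) addition and scalar multiplication are $C^0$; (III) a $C^0$-map on open $U\subseteq\mathbb{K}$ is determined by its values on $U\cap\mathbb{K}^\times$. For open $V\subseteq X$, $V^{[1]}=\{(x,v,t)\in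 V\times X\times\mathbb{K}:x+tv\in V\}$; a $C^0$-map $g$ is $C^1$ if there is a $C^0$-map $g^{[1]}$ on $V^{[1]}$ with $g(x+tv)-g(x)=t\,g^{[1]}(x,v,t)$; recursively $g$ is $C^{k+1}$ if $C^k$ and $g^{[k]}$ is $C^1$ with $g^{[k+1]}=(g^{[k]})^{[1]}$ on $V^{[k+1]}=(V^{[k]})^{[1]}$. For $g$ of class $C^1$, $\partial_vg(x):=g^{[1]}(x,v,0)$ (if $g$ is $C^m$ then $\partial_vg$ is $C^{m-1}$). For $f$ of class $C^n$ and $k\le n$, $d^kf(x)(v_1,\dots,v_k):=\partial_{v_1}\cdots\partial_{v_k}f(x)$. *)

From mathcomp Require Import all_boot all_algebra.
From mathcomp Require Import fingroup perm.
From Stdlib Require Import ClassicalEpsilon.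
Unset Printing Implicit Defensive.
Import GRing.Theory.
Local Open Scope ring_scope.

Record Top (T : Type) := MkTop {
  topen : (T -> Prop) -> Prop;
  topen_T : topen (fun _ => True);
  topen_I : forall A B, topen A -> topen B -> topen (fun x => A x /\ B x);
  topen_U : forall (I : Type) (A : I -> T -> Prop),
      (forall i, topen (A i)) -> topen (fun x => exists i, A i x) }.
Arguments topen {T} t A.

(* Topologized K-modules (no compatibility between topology and algebra). *)
Record TMod (K : comUnitRingType) := MkTMod {
  tcar :> lmodType K;
  ttop : Top tcar }.
Arguments MkTMod {K} tcar ttop.
Arguments tcar {K} t.
Arguments ttop {K} t.

Definition op (K : comUnitRingType) (E : TMod K) (A : E -> Prop) : Prop :=
  topen (ttop E) A.
Arguments op {K E} A.

Definition Kmod (K : comUnitRingType) (tK : Top K) : TMod K :=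
  @MkTMod K (K^o) tK.
Arguments Kmod {K} tK.

(* Data of a C^0-concept: the class M, the sets C^0(U,F) (maps U -> F are
   represented by total maps E -> F, only their values on U matter, see
   axiom c0_ext), and the chosen topologies on products. *)
Record C0Data (K : comUnitRingType) := MkC0Data {
  cM : TMod K -> Prop;
  cC0 : forall E F : TMod K, (E -> Prop) -> (E -> F) -> Prop;
  cptop : forall E1 E2 : TMod K, Top (E1 * E2)%type }.
Arguments cC0 {K} c E F _ _.
Arguments cM {K} c _.
Arguments cptop {K} c E1 E2.

Definition tprod (K : comUnitRingType) (D : C0Data K) (E1 E2 : TMod K)
  : TMod K := @MkTMod K (E1 * E2)%type (cptop D E1 E2).
Arguments tprod {K} D E1 E2.

Record C0Concept (K : comUnitRingType) (tK : Top K) (D : C0Data K) : Prop := {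
  cM_K : cM D (Kmod tK);
  c0_dom : forall (E F : TMod K) U f, cC0 D E F U f -> cM D E /\ cM D F /\ op U;
  c0_cont : forall (E F : TMod K) U f, cC0 D E F U f ->
      forall W : F -> Prop, op W -> op (fun x => U x /\ W (f x));
  c0_ext : forall (E F : TMod K) U (f g : E -> F), cC0 D E F U f ->
      (forall x, U x -> f x = g x) -> cC0 D E F U g;
  cM_prod : forall E1 E2, cM D E1 -> cM D E2 -> cM D (tprod D E1 E2);
  c0_comp : forall (E F G : TMod K) U W (f : E -> F) (g : F -> G),
      cC0 D E F U f -> cC0 D F G W g -> (forall x, U x -> W (f x)) ->
      cC0 D E G U (fun x => g (f x));
  c0_id : forall (E : TMod K) U, cM D E -> op U -> cC0 D E E U (fun x => x);
  c0_affine : forall (E : TMod K) (r : K) (b : E), cM D E ->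
      cC0 D E E (fun _ => True) (fun x => r *: x + b);
  c0_line : forall (E : TMod K) (v x : E), cM D E ->
      cC0 D (Kmod tK) E (fun _ => True) (fun t : K => t *: v + x);
  units_open : topen tK (fun t : K => t \is a GRing.unit);
  c0_inv : cC0 D (Kmod tK) (Kmod tK) (fun t : K => t \is a GRing.unit)
      (fun t : K => t^-1);
  c0_local : forall (E F : TMod K) (U : E -> Prop) (f : E -> F)
      (I : Type) (Ui : I -> E -> Prop),
      cM D E -> cM D F -> op U -> (forall i, op (Ui i)) ->
      (forall x, U x <-> exists i, Ui i x) ->
      (forall i, cC0 D E F (Ui i) f) -> cC0 D E F U f;
  c0_fst : forall E1 E2, cM D E1 -> cM D E2 ->
      cC0 D (tprod D E1 E2) E1 (fun _ => True) (fun p => p.1);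
  c0_snd : forall E1 E2, cM D E1 -> cM D E2 ->
      cC0 D (tprod D E1 E2) E2 (fun _ => True) (fun p => p.2);
  c0_inl : forall (E1 E2 : TMod K) (y : E2), cM D E1 -> cM D E2 ->
      cC0 D E1 (tprod D E1 E2) (fun _ => True) (fun v => (v, y));
  c0_inr : forall (E1 E2 : TMod K) (x : E1), cM D E1 -> cM D E2 ->
      cC0 D E2 (tprod D E1 E2) (fun _ => True) (fun w => (x, w));
  c0_pair : forall (E1 E2 F1 F2 : TMod K) U1 U2 (f1 : E1 -> F1) (f2 : E2 -> F2),
      cC0 D E1 F1 U1 f1 -> cC0 D E2 F2 U2 f2 ->
      cC0 D (tprod D E1 E2) (tprod D F1 F2) (fun p => U1 p.1 /\ U2 p.2)
          (fun p => (f1 p.1, f2 p.2));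
  c0_diag : forall E, cM D E ->
      cC0 D E (tprod D E E) (fun _ => True) (fun x => (x, x));
  c0_swap : forall E1 E2, cM D E1 -> cM D E2 ->
      cC0 D (tprod D E1 E2) (tprod D E2 E1) (fun _ => True) (fun p => (p.2, p.1));
  c0_assoc : forall E1 E2 E3, cM D E1 -> cM D E2 -> cM D E3 ->
      cC0 D (tprod D (tprod D E1 E2) E3) (tprod D E1 (tprod D E2 E3))
          (fun _ => True) (fun p => (p.1.1, (p.1.2, p.2)));
  c0_assocV : forall E1 E2 E3, cM D E1 -> cM D E2 -> cM D E3 ->
      cC0 D (tprod D E1 (tprod D E2 E3)) (tprod D (tprod D E1 E2) E3)
          (fun _ => True) (fun p => ((p.1, p.2.1), p.2.2));
  c0_add : forall E, cM D E ->
      cC0 D (tprod D E E) E (fun _ => True) (fun p => p.1 + p.2);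
  c0_scale : forall E, cM D E ->
      cC0 D (tprod D (Kmod tK) E) E (fun _ => True) (fun p => p.1 *: p.2);
  c0_unit_dense : forall (F : TMod K) (U : K -> Prop) (f g : K -> F),
      cC0 D (Kmod tK) F U f -> cC0 D (Kmod tK) F U g ->
      (forall t, U t -> t \is a GRing.unit -> f t = g t) ->
      forall t, U t -> f t = g t }.
Arguments C0Concept {K} tK D.

(* X^{[1]} = (X x X) x K as a member of M, points written ((x,v),t). *)
Definition tder1 (K : comUnitRingType) (tK : Top K) (D : C0Data K)
  (X : TMod K) : TMod K := tprod D (tprod D X X) (Kmod tK).
Arguments tder1 {K} tK D X.

Definition sder1 (K : comUnitRingType) (tK : Top K) (D : C0Data K)
  (X : TMod K) (V : X -> Prop) : tder1 tK D X -> Prop :=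
  fun p => V p.1.1 /\ V (p.1.1 + (p.2 : K) *: p.1.2).
Arguments sder1 {K} tK D {X} V _.

Definition is_der1 (K : comUnitRingType) (tK : Top K) (D : C0Data K)
  (X F : TMod K) (V : X -> Prop) (g : X -> F) (g1 : tder1 tK D X -> F) : Prop :=
  cC0 D (tder1 tK D X) F (sder1 tK D V) g1 /\
  forall p : tder1 tK D X, sder1 tK D V p ->
    g (p.1.1 + (p.2 : K) *: p.1.2) - g p.1.1 = (p.2 : K) *: g1 p.
Arguments is_der1 {K} tK D {X F} V g g1.

Definition isC1 (K : comUnitRingType) (tK : Top K) (D : C0Data K)
  (X F : TMod K) (V : X -> Prop) (g : X -> F) : Prop :=
  cC0 D X F V g /\ exists g1, is_der1 tK D V g g1.
Arguments isC1 {K} tK D {X F} V g.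

(* The map g^{[1]} (chosen; it is unique on V^{[1]} by axiom (III)). *)
Definition der1 (K : comUnitRingType) (tK : Top K) (D : C0Data K)
  (X F : TMod K) (V : X -> Prop) (g : X -> F) : tder1 tK D X -> F :=
  epsilon (inhabits (fun _ => 0)) (fun g1 => is_der1 tK D V g g1).
Arguments der1 {K} tK D {X F} V g _.

Fixpoint tderk (K : comUnitRingType) (tK : Top K) (D : C0Data K)
  (X : TMod K) (k : nat) : TMod K :=
  match k with 0 => X | k'.+1 => tder1 tK D (tderk K tK D X k') end.
Arguments tderk {K} tK D X k.

Fixpoint sderk (K : comUnitRingType) (tK : Top K) (D : C0Data K)
  (X : TMod K) (V : X -> Prop) (k : nat) : tderk tK D X k -> Prop :=
  match k with 0 => V | k'.+1 => sder1 tK D (sderk K tK D X V k') end.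
Arguments sderk {K} tK D {X} V k _.

Fixpoint derk (K : comUnitRingType) (tK : Top K) (D : C0Data K)
  (X F : TMod K) (V : X -> Prop) (g : X -> F) (k : nat) : tderk tK D X k -> F :=
  match k with
  | 0 => g
  | k'.+1 => der1 tK D (sderk tK D V k') (derk K tK D X F V g k')
  end.
Arguments derk {K} tK D {X F} V g k _.

Fixpoint isCk (K : comUnitRingType) (tK : Top K) (D : C0Data K)
  (X F : TMod K) (V : X -> Prop) (g : X -> F) (k : nat) : Prop :=
  match k with
  | 0 => cC0 D X F V g
  | k'.+1 => isCk K tK D X F V g k' /\ isC1 tK D (sderk tK D V k') (derk tK D V g k')
  end.
Arguments isCk {K} tK D {X F} V g k.

Inductive natinf := NFin of nat | NInf.

Definition isCn (K : comUnitRingType) (tK : Top K) (D : C0Data K)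
  (X F : TMod K) (V : X -> Prop) (g : X -> F) (n : natinf) : Prop :=
  match n with
  | NFin m => isCk tK D V g m
  | NInf => forall m, isCk tK D V g m
  end.
Arguments isCn {K} tK D {X F} V g n.

Definition le_natinf (k : nat) (n : natinf) : Prop :=
  match n with NFin m => (k <= m)%N | NInf => True end.

Definition partial (K : comUnitRingType) (tK : Top K) (D : C0Data K)
  (X F : TMod K) (V : X -> Prop) (v : X) (g : X -> F) : X -> F :=
  fun x => der1 tK D V g ((x, v), (0 : K^o)).
Arguments partial {K} tK D {X F} V v g _.

Fixpoint iter_partial (K : comUnitRingType) (tK : Top K) (D : C0Data K)
  (X F : TMod K) (V : X -> Prop) (vs : seq X) (g : X -> F) : X -> F :=
  match vs with
  | [::] => g
  | v :: vs' => partial tK D V v (iter_partial K tK D X F V vs' g)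
  end.
Arguments iter_partial {K} tK D {X F} V vs g _.

Definition dk (K : comUnitRingType) (tK : Top K) (D : C0Data K)
  (E F : TMod K) (U : E -> Prop) (f : E -> F) (k : nat) (x : E)
  (v : 'I_k -> E) : F :=
  iter_partial tK D U [seq v i | i <- enum 'I_k] f x.
Arguments dk {K} tK D {E F} U f k x v.

(* E^{m+1} as a member of M, formed iteratively: E^1 = E, E^{j+1} = E^j x E *)
Fixpoint tpow (K : comUnitRingType) (D : C0Data K) (E : TMod K) (m : nat)
  : TMod K :=
  match m with 0 => E | m'.+1 => tprod D (tpow K D E m') E end.
Arguments tpow {K} D E m.

Fixpoint tpow_seq (K : comUnitRingType) (D : C0Data K) (E : TMod K) (m : nat)
  : tpow D E m -> seq E :=
  match m with
  | 0 => fun e => [:: e]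
  | m'.+1 => fun p => rcons (tpow_seq K D E m' p.1) p.2
  end.
Arguments tpow_seq {K D E m} p.

Definition tpow_tuple (K : comUnitRingType) (D : C0Data K) (E : TMod K)
  (m : nat) (p : tpow D E m) : 'I_m.+1 -> E :=
  fun i => nth 0 (tpow_seq p) i.
Arguments tpow_tuple {K D E m} p i.

Definition multilinear_map (K : comUnitRingType) (E F : lmodType K) (k : nat)
  (phi : ('I_k -> E) -> F) : Prop :=
  forall (v : 'I_k -> E) (i : 'I_k) (a : K) (w w' : E),
    phi (fun j => if j == i then a *: w + w' else v j) =
    a *: phi (fun j => if j == i then w else v j) +
    phi (fun j => if j == i then w' else v j).

Definition symmetric_map (K : comUnitRingType) (E F : lmodType K) (k : nat)
  (phi : ('I_k -> E) -> F) : Prop :=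
  forall (s : 'S_k) (v : 'I_k -> E), phi (fun j => v (s j)) = phi v.
Arguments multilinear_map {K E F k} phi.
Arguments symmetric_map {K E F k} phi.

From mathcomp Require Import all_boot all_algebra.
From mathcomp Require Import fingroup perm.
From Stdlib Require Import ClassicalEpsilon FunctionalExtensionality PropExtensionality.
Set Implicit Arguments.
Unset Strict Implicit.
Unset Printing Implicit Defensive.
Import GRing.Theory.
Local Open Scope ring_scope.

(* Axiom (III) makes g^[1] unique on V^[1] and turns identities proved for
   invertible t into identities at t = 0.  Applied to the additivity of
   difference quotients it makes v |-> g^[1](x, v, 0) linear.  Applied twice
   to g^[2] at ((z, a, t), (b, 0, 0), s), where
   t s g^[2] = g(z + t a + s b) - g(z + t a) - g(z + s b) + g(z)
   is symmetric in (a, t) and (b, s), it gives Schwarz's symmetry of second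
   derivatives.  A chain rule for precomposition with affine maps identifies
   partial_{v_1} ... partial_{v_k} f(y) with f^[k] evaluated at an explicit point of
   U^[k] depending affinely and C^0 on y and v_1, ..., v_k.  Hence d^k f(x)
   is invariant under adjacent transpositions, hence symmetric; linear in the
   first slot, hence in every slot; and C^0 on E^k. *)

Arguments c0_dom {K tK D} _ {E F U f} _.
Arguments c0_cont {K tK D} _ {E F U f} _ {W} _.
Arguments c0_ext {K tK D} _ {E F U f g} _ _.
Arguments cM_prod {K tK D} _ {E1 E2} _ _.
Arguments c0_comp {K tK D} _ {E F G U W f g} _ _ _.
Arguments c0_id {K tK D} _ {E U} _ _.
Arguments c0_affine {K tK D} _ {E} r b _.
Arguments c0_line {K tK D} _ {E} v x _.
Arguments c0_fst {K tK D} _ {E1 E2} _ _.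
Arguments c0_snd {K tK D} _ {E1 E2} _ _.
Arguments c0_inr {K tK D} _ {E1 E2} x _ _.
Arguments c0_pair {K tK D} _ {E1 E2 F1 F2 U1 U2 f1 f2} _ _.
Arguments c0_diag {K tK D} _ {E} _.
Arguments c0_add {K tK D} _ {E} _.
Arguments c0_scale {K tK D} _ {E} _.
Arguments c0_unit_dense {K tK D} _ {F U f g} _ _ _ t _.

Lemma map_nth_enum_ord (T : Type) (x0 : T) (s : seq T) n :
  size s = n -> [seq nth x0 s i | i : 'I_n <- enum 'I_n] = s.
Proof. by move=> <-; rewrite -[in RHS](mkseq_nth x0 s) /mkseq -val_enum_ord -map_comp. Qed.

Lemma size_tpow_seq (K : comUnitRingType) (D : C0Data K) (E : TMod K) m (p : tpow D E m) :
  size (tpow_seq p) = m.+1.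
Proof. by elim: m p => [|m IH] p //=; rewrite size_rcons IH. Qed.

Section C0Calculus.
Variables (K : comUnitRingType) (tK : Top K) (D : C0Data K).
Hypothesis HD : C0Concept tK D.

Local Notation KM := (Kmod tK).

Lemma op_ext (A : TMod K) (W W' : A -> Prop) :
  (forall x, W x <-> W' x) -> op W -> op W'.
Proof.
move=> h; suff -> : W' = W by [].
apply: functional_extensionality => x.
by apply: propositional_extensionality; apply: iff_sym.
Qed.

Lemma c0_domext (A B : TMod K) (W W' : A -> Prop) (g : A -> B) :
  (forall x, W x <-> W' x) -> cC0 D A B W g -> cC0 D A B W' g.
Proof.
move=> h; suff -> : W' = W by [].
apply: functional_extensionality => x.
by apply: propositional_extensionality; apply: iff_sym.
Qed.

Lemma op_setT (A : TMod K) : op (fun _ : A => True).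
Proof. exact: topen_T. Qed.

Lemma c0_restrict (A B : TMod K) (W W' : A -> Prop) (g : A -> B) :
  cC0 D A B W g -> op W' -> (forall x, W' x -> W x) -> cC0 D A B W' g.
Proof.
move=> hg hW' sW'W; have [hA _] := c0_dom HD hg.
exact: (c0_comp HD (c0_id HD hA hW') hg sW'W).
Qed.

Lemma op_preimage (A B : TMod K) (W : B -> Prop) (g : A -> B) :
  cC0 D A B (fun _ => True) g -> op W -> op (fun x => W (g x)).
Proof. by move=> hg /(c0_cont HD hg); apply: op_ext => x; split => [[]|]. Qed.

Lemma c0_comp_preimage (A B C : TMod K) (W : B -> Prop) (g : A -> B) (h : B -> C) :
  cC0 D A B (fun _ => True) g -> cC0 D B C W h ->
  cC0 D A C (fun x => W (g x)) (fun x => h (g x)).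
Proof.
move=> hg hh; have [_ [_ hW]] := c0_dom HD hh.
apply: (c0_comp HD _ hh) => //.
exact: c0_restrict hg (op_preimage hg hW) _.
Qed.

Lemma c0_compT (A B C : TMod K) (W : A -> Prop) (g : A -> B) (h : B -> C) :
  cC0 D A B W g -> cC0 D B C (fun _ => True) h -> cC0 D A C W (fun x => h (g x)).
Proof. by move=> hg hh; apply: (c0_comp HD hg hh). Qed.

Lemma c0_idT (A : TMod K) : cM D A -> cC0 D A A (fun _ => True) (fun x => x).
Proof. by move=> hA; exact: (c0_id HD hA (op_setT A)). Qed.

Lemma c0_cstT (A B : TMod K) (c : B) :
  cM D A -> cM D B -> cC0 D A B (fun _ => True) (fun _ => c).
Proof. by move=> hA hB; apply: (c0_comp HD (c0_inr HD c hB hA) (c0_fst HD hB hA)). Qed.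

Lemma c0_cst (A B : TMod K) (W : A -> Prop) (c : B) :
  cM D A -> cM D B -> op W -> cC0 D A B W (fun _ => c).
Proof. by move=> hA hB hW; apply: c0_restrict (c0_cstT c hA hB) hW _. Qed.

Lemma c0_pairf (A B C : TMod K) (W : A -> Prop) (g : A -> B) (h : A -> C) :
  cC0 D A B W g -> cC0 D A C W h -> cC0 D A (tprod D B C) W (fun x => (g x, h x)).
Proof.
move=> hg hh; have [hA [_ hW]] := c0_dom HD hg.
have hdiag := c0_restrict (c0_diag HD hA) hW (fun _ _ => I).
exact: (c0_comp HD hdiag (c0_pair HD hg hh)).
Qed.

Lemma c0_fstf (A B C : TMod K) (W : A -> Prop) (g : A -> tprod D B C) :
  cM D B -> cM D C -> cC0 D A (tprod D B C) W g -> cC0 D A B W (fun x => (g x).1).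
Proof. by move=> hB hC hg; apply: c0_compT hg (c0_fst HD hB hC). Qed.

Lemma c0_sndf (A B C : TMod K) (W : A -> Prop) (g : A -> tprod D B C) :
  cM D B -> cM D C -> cC0 D A (tprod D B C) W g -> cC0 D A C W (fun x => (g x).2).
Proof. by move=> hB hC hg; apply: c0_compT hg (c0_snd HD hB hC). Qed.

Lemma c0_addf (A B : TMod K) (W : A -> Prop) (g h : A -> B) :
  cC0 D A B W g -> cC0 D A B W h -> cC0 D A B W (fun x => g x + h x).
Proof.
move=> hg hh; have [_ [hB _]] := c0_dom HD hg.
exact: c0_compT (c0_pairf hg hh) (c0_add HD hB).
Qed.

Lemma c0_scalef (A B : TMod K) (W : A -> Prop) (s : A -> KM) (g : A -> B) :
  cC0 D A KM W s -> cC0 D A B W g -> cC0 D A B W (fun x => (s x : K) *: g x).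
Proof.
move=> hs hg; have [_ [hB _]] := c0_dom HD hg.
exact: c0_compT (c0_pairf hs hg) (c0_scale HD hB).
Qed.

Lemma cM_KM : cM D KM. Proof. exact: cM_K HD. Qed.

Lemma cM_tder1 (X : TMod K) : cM D X -> cM D (tder1 tK D X).
Proof. by move=> hX; exact: (cM_prod HD (cM_prod HD hX hX) cM_KM). Qed.

Lemma cM_tderk (X : TMod K) k : cM D X -> cM D (tderk tK D X k).
Proof. by move=> hX; elim: k => //= k IH; apply: cM_tder1. Qed.

Lemma cM_tpow (X : TMod K) m : cM D X -> cM D (tpow D X m).
Proof. by move=> hX; elim: m => //= m IH; exact: (cM_prod HD IH hX). Qed.

Lemma op_sder1 (X : TMod K) (V : X -> Prop) : cM D X -> op V -> op (sder1 tK D V).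
Proof.
move=> hX hV; have hXX := cM_prod HD hX hX.
have p1 := c0_fstf hXX cM_KM (c0_idT (cM_tder1 hX)).
have p2 := c0_sndf hXX cM_KM (c0_idT (cM_tder1 hX)).
have p11 := c0_fstf hX hX p1; have p12 := c0_sndf hX hX p1.
have hmove := c0_addf p11 (c0_scalef p2 p12).
exact: (topen_I _ _ _ _ (op_preimage p11 hV) (op_preimage hmove hV)).
Qed.

Lemma der1_spec (X F : TMod K) (V : X -> Prop) (g : X -> F) :
  (exists g1, is_der1 tK D V g g1) -> is_der1 tK D V g (der1 tK D V g).
Proof. exact: epsilon_spec. Qed.

Lemma der1_congr (X F : TMod K) (V : X -> Prop) (g g' : X -> F) :
  (forall y, V y -> g y = g' y) -> der1 tK D V g = der1 tK D V g'.
Proof.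
move=> eq_gg'; rewrite /der1; congr epsilon.
apply: functional_extensionality => g1; apply: propositional_extensionality.
by split=> -[hc he]; split=> // p [hp1 hp2]; move: (he p (conj hp1 hp2));
  rewrite ?eq_gg' // -?eq_gg'.
Qed.

Lemma partial_congr (X F : TMod K) (V : X -> Prop) (g g' : X -> F) v :
  (forall y, V y -> g y = g' y) -> partial tK D V v g = partial tK D V v g'.
Proof. by move=> eq_gg'; rewrite /partial (der1_congr eq_gg'). Qed.

Lemma scaler_unit_inj (V : lmodType K) (t : K) (a b : V) :
  t \is a GRing.unit -> t *: a = t *: b -> a = b.
Proof. by move=> ht /(congr1 ( *:%R t^-1)); rewrite !scalerA mulVr // !scale1r. Qed.

Lemma der1_unique (X F : TMod K) (V : X -> Prop) (g : X -> F) g1 g2 p :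
  cM D X -> is_der1 tK D V g g1 -> is_der1 tK D V g g2 -> sder1 tK D V p ->
  g1 p = g2 p.
Proof.
move=> hX [c1 e1] [c2 e2]; case: p => [[y v] t0] hp.
have hline : cC0 D KM (tder1 tK D X) (fun _ => True) (fun t => ((y, v), t)) :=
  c0_inr HD (E1 := tprod D X X) (E2 := KM) (y, v) (cM_prod HD hX hX) cM_KM.
apply: (c0_unit_dense HD (c0_comp_preimage hline c1) (c0_comp_preimage hline c2) _ t0 hp).
move=> t ht hu; apply: (scaler_unit_inj hu).
by rewrite -(e1 ((y, v), t)) // -(e2 ((y, v), t)).
Qed.

Lemma der1_eq (X F : TMod K) (V : X -> Prop) (g : X -> F) g1 p :
  cM D X -> is_der1 tK D V g g1 -> sder1 tK D V p -> der1 tK D V g p = g1 p.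
Proof. by move=> hX hg1; apply: der1_unique hX (der1_spec (ex_intro _ g1 hg1)) hg1. Qed.

Lemma der1_comp_affine (X E F : TMod K) (V : X -> Prop) (G : X -> F) G1
    (U : E -> Prop) (A L : E -> X) (h : E -> F) :
  op U -> is_der1 tK D V G G1 ->
  (forall y (t : K) w, A (y + t *: w) = A y + t *: L w) ->
  cC0 D E X (fun _ => True) A -> cC0 D E X (fun _ => True) L ->
  (forall y, U y -> V (A y)) -> (forall y, U y -> h y = G (A y)) ->
  is_der1 tK D U h (fun p => G1 ((A p.1.1, L p.1.2), p.2)).
Proof.
move=> hU [c1 e1] affA cA cL sAV eq_h; have [hE [hX _]] := c0_dom HD cA.
have sder1_A p : sder1 tK D U p -> sder1 tK D V ((A p.1.1, L p.1.2), p.2).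
  by case=> hy hyw; split=> /=; rewrite -?affA; apply: sAV.
split=> [|p hp]; last first.
  case: (hp) => hy hyw; rewrite (eq_h _ hy) (eq_h _ hyw) affA.
  exact: e1 (sder1_A p hp).
have hEE := cM_prod HD hE hE.
have p1 := c0_fstf hEE cM_KM (c0_idT (cM_tder1 hE)).
have p2 := c0_sndf hEE cM_KM (c0_idT (cM_tder1 hE)).
have cAL := c0_pairf (c0_pairf (c0_compT (c0_fstf hE hE p1) cA)
                                (c0_compT (c0_sndf hE hE p1) cL)) p2.
exact: c0_restrict (c0_comp_preimage cAL c1) (op_sder1 hE hU) sder1_A.
Qed.

(* For invertible t, split h(x + t (a w + w')) - h(x) at x + t a w, cancel t
   and pass to t = 0 by (III). *)
Lemma der1_linear (E F : TMod K) (U : E -> Prop) (h : E -> F) h1 x (a : K) (w w' : E) :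
  cM D E -> op U -> is_der1 tK D U h h1 -> U x ->
  h1 ((x, a *: w + w'), 0) = a *: h1 ((x, w), 0) + h1 ((x, w'), 0).
Proof.
move=> hE hU [c1 e1] hx; have hEE := cM_prod HD hE hE.
pose P1 (t : KM) : tder1 tK D E := ((x, a *: w + w'), t).
pose P2 (t : KM) : tder1 tK D E := ((x, w), (a * t : KM)).
pose P3 (t : KM) : tder1 tK D E := ((x + t *: (a *: w), w'), t).
have cP1 : cC0 D KM (tder1 tK D E) (fun _ => True) P1 :=
  c0_inr HD (E1 := tprod D E E) (x, a *: w + w') hEE cM_KM.
have cP2 : cC0 D KM (tder1 tK D E) (fun _ => True) P2.
  apply: c0_pairf (c0_cstT (B := tprod D E E) (x, w) cM_KM hEE) _.
  by apply: (c0_ext HD (c0_affine HD a 0 cM_KM)) => t _; rewrite addr0.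
have cP3 : cC0 D KM (tder1 tK D E) (fun _ => True) P3.
  apply: c0_pairf (c0_pairf _ (c0_cstT w' cM_KM hE)) (c0_idT cM_KM).
  by apply: (c0_ext HD (c0_line HD (a *: w) x hE)) => t _; rewrite addrC.
pose W t := [/\ sder1 tK D U (P1 t), sder1 tK D U (P2 t) & sder1 tK D U (P3 t)].
have hW : op W.
  have hS := op_sder1 hE hU.
  apply: op_ext (topen_I _ _ _ _ (op_preimage cP1 hS)
                  (topen_I _ _ _ _ (op_preimage cP2 hS) (op_preimage cP3 hS))) => t.
  by split=> [[? []]|[]].
have k1 := c0_restrict (c0_comp_preimage cP1 c1) hW (fun _ '(And3 p _ _) => p).
have k2 := c0_restrict (c0_comp_preimage cP2 c1) hW (fun _ '(And3 _ p _) => p).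
have k3 := c0_restrict (c0_comp_preimage cP3 c1) hW (fun _ '(And3 _ _ p) => p).
have k23 := c0_addf (c0_scalef (c0_cst (B := KM) (a : KM) cM_KM cM_KM hW) k2) k3.
have hW0 : W 0 by rewrite /W /P1 /P2 /P3 /sder1 /= mulr0 !scale0r !addr0.
have := c0_unit_dense HD k1 k23 _ 0 hW0.
rewrite /P1 /P2 /P3 /= mulr0 scale0r addr0; apply=> t [ht1 ht2 ht3] hu.
apply: (scaler_unit_inj hu).
have := e1 _ ht1; have := e1 _ ht2; have := e1 _ ht3.
rewrite /P1 /P2 /P3 /= => E3 E2 E1.
rewrite scalerDr scalerA [t * a]mulrC -E1 -E2 -E3 [a * t]mulrC -scalerA.
by rewrite scalerDr addrA [X in _ = X]addrC addrA subrK.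
Qed.

Lemma partial_linear (X F : TMod K) (V : X -> Prop) (g : X -> F) x (a : K) (w w' : X) :
  cM D X -> op V -> (exists g1, is_der1 tK D V g g1) -> V x ->
  partial tK D V (a *: w + w') g x = a *: partial tK D V w g x + partial tK D V w' g x.
Proof. by move=> hX hV /der1_spec; apply: der1_linear. Qed.

Definition der2_point (X : TMod K) (z a b : X) (t s : K) : tder1 tK D (tder1 tK D X) :=
  ((((z, a), (t : KM)), ((b, 0), (0 : KM))), (s : KM)).

Lemma sder2_point (X : TMod K) (V : X -> Prop) z a b t s :
  sder1 tK D (sder1 tK D V) (der2_point z a b t s) <->
  [/\ V z, V (z + t *: a), V (z + s *: b) & V (z + s *: b + t *: a)].
Proof.
rewrite /der2_point /sder1 /= !scaler0 !addr0.
by split=> [[[? ?] [? ?]]|[? ? ? ?]].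
Qed.

Lemma sder2_point_swap (X : TMod K) (V : X -> Prop) z a b t s :
  sder1 tK D (sder1 tK D V) (der2_point z b a s t) <->
  sder1 tK D (sder1 tK D V) (der2_point z a b t s).
Proof.
rewrite !sder2_point [z + t *: a + s *: b]addrAC.
by split=> -[? ? ? ?].
Qed.

Lemma c0_der2_point_l (X : TMod K) (z a b : X) (s : K) : cM D X ->
  cC0 D KM (tder1 tK D (tder1 tK D X)) (fun _ => True) (fun t => der2_point z a b t s).
Proof.
move=> hX; have hXX := cM_prod HD hX hX; have hX1 := cM_tder1 hX; rewrite /der2_point.
apply: c0_pairf; last exact: c0_cstT _ cM_KM cM_KM.
apply: c0_pairf; last exact: c0_cstT _ cM_KM hX1.
exact: c0_pairf (c0_cstT _ cM_KM hXX) (c0_idT cM_KM).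
Qed.

Lemma c0_der2_point_r (X : TMod K) (z a b : X) (t : K) : cM D X ->
  cC0 D KM (tder1 tK D (tder1 tK D X)) (fun _ => True) (fun s => der2_point z a b t s).
Proof.
move=> hX; have hX1 := cM_tder1 hX; rewrite /der2_point.
exact: c0_pairf (c0_cstT _ cM_KM (cM_prod HD hX1 hX1)) (c0_idT cM_KM).
Qed.

Lemma tder1_translate (X : TMod K) (z a b : X) (t s : K) :
  (((z, a), (t : KM)) + s *: ((b, 0), (0 : KM)) : tder1 tK D X) = ((z + s *: b, a), (t : KM)).
Proof.
have -> : (((z, a), (t : KM)) + s *: ((b, 0), (0 : KM)) : tder1 tK D X) =
  ((z + s *: b, a + s *: 0), (t + s * 0 : KM)) by [].
by rewrite scaler0 mulr0 !addr0.
Qed.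

(* Both sides, multiplied by t s, equal
   G(z + t a + s b) - G(z + t a) - G(z + s b) + G(z). *)
Lemma der2_sym_units (X F : TMod K) (V : X -> Prop) (G : X -> F) G1 G2 z a b t s :
  is_der1 tK D V G G1 -> is_der1 tK D (sder1 tK D V) G1 G2 ->
  t \is a GRing.unit -> s \is a GRing.unit ->
  sder1 tK D (sder1 tK D V) (der2_point z a b t s) ->
  G2 (der2_point z a b t s) = G2 (der2_point z b a s t).
Proof.
move=> [_ e1] [_ e2] ht hs hQ; have hQ' := (sder2_point_swap V z a b t s).2 hQ.
have := e2 _ hQ; have := e2 _ hQ'.
rewrite /der2_point /= !tder1_translate => E2b E2a.
have [hz hta hsb hsbta] := (sder2_point V z a b t s).1 hQ.
have E1a := e1 ((z, a), t) (conj hz hta).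
have E1b := e1 ((z + s *: b, a), t) (conj hsb hsbta).
have E1c := e1 ((z, b), s) (conj hz hsb).
have [_ _ _ htasb] := (sder2_point V z b a s t).1 hQ'.
have E1d := e1 ((z + t *: a, b), s) (conj hta htasb).
apply: (scaler_unit_inj (_ : t * s \is a GRing.unit)); first by rewrite unitrM ht hs.
rewrite -scalerA /der2_point -E2a scalerBr /= -E1a -E1b.
rewrite mulrC -scalerA -E2b scalerBr /= -E1c -E1d /= [z + t *: a + s *: b]addrAC.
by rewrite !opprD !opprK addrACA.
Qed.

Lemma der2_sym (X F : TMod K) (V : X -> Prop) (G : X -> F) G1 G2 (z a b : X) :
  cM D X -> is_der1 tK D V G G1 -> is_der1 tK D (sder1 tK D V) G1 G2 -> V z ->
  G2 (der2_point z a b 0 0) = G2 (der2_point z b a 0 0).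
Proof.
move=> hX hG1 hG2 hz; have [c2 _] := hG2.
have dom_swap t s := sder2_point_swap V z a b t s.
have sym_t0 s : s \is a GRing.unit ->
    sder1 tK D (sder1 tK D V) (der2_point z a b 0 s) ->
    G2 (der2_point z a b 0 s) = G2 (der2_point z b a s 0).
  move=> hs hQ.
  have k1 := c0_comp_preimage (c0_der2_point_l z a b s hX) c2.
  have k2 := c0_domext (fun t : KM => dom_swap t s)
    (c0_comp_preimage (c0_der2_point_r z b a s hX) c2).
  apply: (c0_unit_dense HD k1 k2 _ 0 hQ) => t hQt ht.
  exact: der2_sym_units hG1 hG2 ht hs hQt.
have k1 := c0_comp_preimage (c0_der2_point_r z a b 0 hX) c2.
have k2 := c0_domext (fun s : KM => dom_swap 0 s)
  (c0_comp_preimage (c0_der2_point_l z b a 0 hX) c2).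
apply: (c0_unit_dense HD k1 k2 _ 0) => [s hQs hs|]; first exact: sym_t0.
by apply/sder2_point; rewrite !scale0r !addr0.
Qed.

Section IteratedPartials.
Variables (E F : TMod K) (U : E -> Prop) (f : E -> F).
Hypotheses (hE : cM D E) (hU : op U).

Lemma isCk_le m j : (j <= m)%N -> isCk tK D U f m -> isCk tK D U f j.
Proof.
elim: m => [|m IH]; first by rewrite leqn0 => /eqP ->.
by rewrite leq_eqVlt => /orP [/eqP -> //|/IH hj [/hj]].
Qed.

Fixpoint tderk_embed k : E -> tderk tK D E k :=
  match k with
  | 0 => fun w => w
  | k'.+1 => fun w => ((tderk_embed k' w, 0), (0 : KM))
  end.

Lemma c0_tderk_embed k : cC0 D E (tderk tK D E k) (fun _ => True) (tderk_embed k).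
Proof.
elim: k => [|k IH] /=; first exact: c0_idT.
exact: c0_pairf (c0_pairf IH (c0_cstT 0 hE (cM_tderk k hE))) (c0_cstT _ hE cM_KM).
Qed.

Record adapted k (A : E -> tderk tK D E k) : Prop := Adapted {
  adapted_affine : forall y (t : K) w, A (y + t *: w) = A y + t *: tderk_embed k w;
  adapted_c0 : cC0 D E (tderk tK D E k) (fun _ => True) A;
  adapted_sub : forall y, U y -> sderk tK D U k (A y) }.
Arguments adapted : clear implicits.

Lemma adapted_id : adapted 0 (fun y => y).
Proof. by split=> //; apply: c0_idT. Qed.

Lemma adapted_step k A (v : E) :
  adapted k A -> adapted k.+1 (fun y => ((A y, tderk_embed k v), (0 : KM))).
Proof.
case=> affA cA sA; split=> [y t w /=||y hy].
- by rewrite affA tder1_translate.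
- exact: c0_pairf (c0_pairf cA (c0_cstT _ hE (cM_tderk k hE))) (c0_cstT _ hE cM_KM).
- by split=> /=; rewrite ?scale0r ?addr0; apply: sA.
Qed.

Lemma der1_adapted k A (h : E -> F) :
  isCk tK D U f k.+1 -> adapted k A -> (forall y, U y -> h y = derk tK D U f k (A y)) ->
  is_der1 tK D U h (fun p => derk tK D U f k.+1 ((A p.1.1, tderk_embed k p.1.2), p.2)).
Proof.
move=> [_ [_ hC1]] [affA cA sA] eq_h.
exact: der1_comp_affine hU (der1_spec hC1) affA cA (c0_tderk_embed k) sA eq_h.
Qed.

Lemma partial_adapted k A (h : E -> F) (v : E) :
  isCk tK D U f k.+1 -> adapted k A -> (forall y, U y -> h y = derk tK D U f k (A y)) ->
  forall y, U y -> partial tK D U v h y = derk tK D U f k.+1 ((A y, tderk_embed k v), 0).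
Proof.
move=> hC hA eq_h y hy; rewrite /partial (der1_eq hE (der1_adapted hC hA eq_h)) //.
by split; rewrite //= scale0r addr0.
Qed.

Fixpoint iter_partial_point (vs : seq E) (y : E) : tderk tK D E (size vs) :=
  match vs return tderk tK D E (size vs) with
  | [::] => y
  | v :: vs' => ((iter_partial_point vs' y, tderk_embed (size vs') v), (0 : KM))
  end.

Lemma adapted_iter_partial_point vs : adapted (size vs) (iter_partial_point vs).
Proof. by elim: vs => [|v vs IH]; [apply: adapted_id | apply: adapted_step]. Qed.

Lemma iter_partial_pointE vs : isCk tK D U f (size vs) ->
  forall y, U y ->
  iter_partial tK D U vs f y = derk tK D U f (size vs) (iter_partial_point vs y).
Proof.
elim: vs => [//|v vs IH] hC y hy.
exact: partial_adapted hC (adapted_iter_partial_point vs) (IH hC.1) y hy.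
Qed.

Lemma iter_partial_der1 vs : isCk tK D U f (size vs).+1 ->
  exists h1, is_der1 tK D U (iter_partial tK D U vs f) h1.
Proof.
move=> hC; have hA := adapted_iter_partial_point vs.
by eexists; apply: der1_adapted hC hA (iter_partial_pointE hC.1).
Qed.

Lemma iter_partial_swap v w vs y : isCk tK D U f (size vs).+2 -> U y ->
  iter_partial tK D U [:: v, w & vs] f y = iter_partial tK D U [:: w, v & vs] f y.
Proof.
move=> hC hy; rewrite !iter_partial_pointE //=.
(* Both sides are f^[k+2] at a der2_point, up to conversion. *)
have hz := adapted_sub (adapted_iter_partial_point vs) hy.
exact: der2_sym (cM_tderk _ hE) (der1_spec hC.1.2.2) (der1_spec hC.2.2) hz.
Qed.

Lemma iter_partial_move_front ws1 v ws2 y :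
  isCk tK D U f (size (ws1 ++ v :: ws2)) -> U y ->
  iter_partial tK D U (ws1 ++ v :: ws2) f y = iter_partial tK D U (v :: ws1 ++ ws2) f y.
Proof.
elim: ws1 y => [//|u ws1 IH] y hC hy.
have hC' := isCk_le (leqnSn _) hC.
rewrite /= (partial_congr _ (IH^~ hC')).
by apply: iter_partial_swap hy; move: hC; rewrite /= size_cat /= addnS -size_cat.
Qed.

Lemma iter_partial_perm vs ws y : perm_eq vs ws -> isCk tK D U f (size vs) -> U y ->
  iter_partial tK D U vs f y = iter_partial tK D U ws f y.
Proof.
elim: vs ws y => [|v vs IH] ws y eq_vs_ws hC hy.
  by move: (perm_size eq_vs_ws); case: ws {eq_vs_ws}.
have hv : v \in ws by rewrite -(perm_mem eq_vs_ws) mem_head.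
move: eq_vs_ws; case/splitPr: hv => ws1 ws2 eq_vs_ws.
rewrite iter_partial_move_front //; last by rewrite -(perm_size eq_vs_ws).
have eq_rest : perm_eq vs (ws1 ++ ws2).
  by rewrite -(perm_cons v) (perm_trans eq_vs_ws) // -cat1s perm_catCA.
by rewrite /= (partial_congr _ (fun z => IH _ z eq_rest hC.1)).
Qed.

Fixpoint tpow_point (y : E) m : tpow D E m -> tderk tK D E m.+1 :=
  match m return tpow D E m -> tderk tK D E m.+1 with
  | 0 => fun p => ((y, p), (0 : KM))
  | m'.+1 => fun p => ((@tpow_point y m' p.1, tderk_embed m'.+1 p.2), (0 : KM))
  end.
Arguments tpow_point : clear implicits.

Lemma adapted_tpow_point m (p : tpow D E m) : adapted m.+1 (fun y => tpow_point y m p).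
Proof.
elim: m p => [|m IH] p; first exact: adapted_step p adapted_id.
exact: adapted_step p.2 (IH p.1).
Qed.

Lemma c0_tpow_point x m :
  cC0 D (tpow D E m) (tderk tK D E m.+1) (fun _ => True) (tpow_point x m).
Proof.
elim: m => [|m IH] /=.
  exact: c0_pairf (c0_pairf (c0_cstT x hE hE) (c0_idT hE)) (c0_cstT _ hE cM_KM).
have hm := cM_tpow m hE; have hm1 := cM_tpow m.+1 hE.
have p1 := c0_fstf hm hE (c0_idT hm1); have p2 := c0_sndf hm hE (c0_idT hm1).
exact: c0_pairf (c0_pairf (c0_compT p1 IH) (c0_compT p2 (c0_tderk_embed m.+1)))
                (c0_cstT _ hm1 cM_KM).
Qed.

Lemma iter_partial_tpow_point m (p : tpow D E m) y : isCk tK D U f m.+1 -> U y ->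
  iter_partial tK D U (rev (tpow_seq p)) f y = derk tK D U f m.+1 (tpow_point y m p).
Proof.
elim: m p y => [|m IH] p y hC hy.
  exact: partial_adapted hC adapted_id (fun _ _ => erefl) y hy.
rewrite /= rev_rcons.
exact: partial_adapted hC (adapted_tpow_point p.1) (fun z => IH p.1 z hC.1) y hy.
Qed.

Lemma dk_sym k x : isCk tK D U f k -> U x -> symmetric_map (dk tK D U f k x).
Proof.
move=> hC hx s v; rewrite /dk.
apply: (iter_partial_perm _ _ hx); last by rewrite size_map size_enum_ord.
rewrite (map_comp v s); apply: perm_map; apply: uniq_perm.
- by rewrite map_inj_uniq ?enum_uniq //; apply: perm_inj.
- exact: enum_uniq.
- by move=> j; rewrite mem_enum; apply/mapP; exists (s^-1 j)%g; rewrite ?mem_enum ?permKV.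
Qed.

Lemma size_rem_enum_ord k (v : 'I_k -> E) (i : 'I_k) :
  (size [seq v j | j <- rem i (enum 'I_k)]).+1 = k.
Proof.
rewrite size_map size_rem ?mem_enum // size_enum_ord prednK //.
exact: leq_ltn_trans (leq0n i) (ltn_ord i).
Qed.

Lemma dk_slot k x (v : 'I_k -> E) (i : 'I_k) u : isCk tK D U f k -> U x ->
  dk tK D U f k x (fun j => if j == i then u else v j) =
  iter_partial tK D U (u :: [seq v j | j <- rem i (enum 'I_k)]) f x.
Proof.
move=> hC hx; rewrite /dk.
apply: (iter_partial_perm _ _ hx); last by rewrite size_map size_enum_ord.
have hi : i \in enum 'I_k by rewrite mem_enum.
apply: perm_trans (perm_map _ (perm_to_rem hi)) _; rewrite /= eqxx perm_cons.
suff -> : [seq (if j == i then u else v j) | j <- rem i (enum 'I_k)] =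
          [seq v j | j <- rem i (enum 'I_k)] by [].
apply/eq_in_map => j; rewrite mem_rem_uniq ?enum_uniq // inE.
by case/andP => /negbTE ->.
Qed.

Lemma dk_multilinear k x : isCk tK D U f k -> U x -> multilinear_map (dk tK D U f k x).
Proof.
move=> hC hx v i a w w'; rewrite !dk_slot //.
apply: partial_linear hE hU _ hx; apply: iter_partial_der1.
by rewrite size_rem_enum_ord.
Qed.

Lemma dk_c0 x m : isCk tK D U f m.+1 -> U x ->
  cC0 D (tpow D E m) F (fun _ => True) (fun p => dk tK D U f m.+1 x (tpow_tuple p)).
Proof.
move=> hC hx; have [c_der _] := der1_spec hC.2.2.
have c_comp := c0_comp_preimage (c0_tpow_point x m) c_der.
have c_compT := c0_domext (W' := fun _ => True)
  (fun p => conj (fun _ => I) (fun _ => adapted_sub (adapted_tpow_point p) hx)) c_comp.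
apply: (c0_ext HD c_compT) => p _.
rewrite /dk /tpow_tuple (map_nth_enum_ord _ (size_tpow_seq p)).
have perm_seq_rev : perm_eq (tpow_seq p) (rev (tpow_seq p)) by rewrite perm_sym perm_rev.
rewrite (iter_partial_perm perm_seq_rev _ hx) ?size_tpow_seq //.
by rewrite iter_partial_tpow_point.
Qed.

End IteratedPartials.
End C0Calculus.

Unset Implicit Arguments.
Set Strict Implicit.

Theorem lemma4p8 (K : comUnitRingType) (tK : Top K) (D : C0Data K)
  (HD : C0Concept tK D) (E F : TMod K) (HE : cM D E) (HF : cM D F)
  (U : E -> Prop) (HU : op U) (n : natinf) (f : E -> F)
  (Hf : isCn tK D U f n) (k : nat) (hk : le_natinf k n) (x : E) (hx : U x) :
  multilinear_map (dk tK D U f k x) /\ symmetric_map (dk tK D U f k x) /\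
  (forall m : nat, k = m.+1 ->
     cC0 D (tpow D E m) F (fun _ => True)
       (fun p => dk tK D U f m.+1 x (tpow_tuple p))).
Proof.
have hCk : isCk tK D U f k.
  by case: n Hf hk => [m|] Hf hk //=; apply: isCk_le hk Hf.
split; [|split].
- exact: (dk_multilinear HD HE HU hCk hx).
- exact: (dk_sym HD HE HU hCk hx).
- by move=> m hm; subst k; exact: (dk_c0 HD HE HU hCk hx).
Qed.
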